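(* For all integers $n\ge1$ and $r\ge1$: (a) $\displaystyle\sum_{k=1}^{n}\bigl(2^{\tau(k)}-1\bigr)\omega(n-k)=\sum_{\substack{m+k=n\\ m\ge1,\ k\ge0}}\Phi^\tau(m)\,\Omega_m(k)$; (b) $\displaystyle\sum_{k=1}^{n}\binom{\tau(k)}{r}\omega(n-k)=\sum_{\substack{m+k=n\\ m\ge1,\ k\ge0}}\Phi^\tau_r(m)\,\Omega_m(k)$.
   Context: $\tau(n)$ is the number of positive divisors of $n$. $\Phi^\tau(n)$ is the number of nonempty subsets $S$ of the set of positive divisors of $n$ such that $\gcd(\gcd(S),n)=1$, and $\Phi^\tau_r(n)$ is the number of such subsets of cardinality $r$. $\omega:\mathbb{Z}\to\mathbb{Z}$ is defined by $\omega(0)=1$; $\omega(m)=(-1)^j$ if $m=\frac{3j^2\pm j}{2}$ for some integer $j\ge1$; $\omega(m)=0$ otherwise (in particular for $m<0$). For $m\ge1$ and integer $k$, $\Omega_m(k)=\sum_{j\ge0}\omega(k-jm)=\omega(k)+\omega(k-m)+\omega(k-2m)+\cdots$. *)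

From mathcomp Require Import all_boot all_order all_algebra.
Set Implicit Arguments. Unset Strict Implicit. Unset Printing Implicit Defensive.
Import GRing.Theory Num.Theory.

Definition tau (n : nat) : nat := size (divisors n).

Definition divset (n : nat) : {set 'I_n.+1} :=
  [set d : 'I_n.+1 | (0 < d)%N && ((d : nat) %| n)].

(* gcd of a finite set of naturals (gcd of the empty set is 0) *)
Definition gcdS (n : nat) (S : {set 'I_n.+1}) : nat :=
  \big[gcdn/0%N]_(d in S) (d : nat).

Definition PhiTau (n : nat) : nat :=
  #|[set S : {set 'I_n.+1} |
      [&& S \subset divset n, S != set0 & gcdn (gcdS S) n == 1%N]]|.

Definition PhiTau_r (r n : nat) : nat :=
  #|[set S : {set 'I_n.+1} |
      [&& S \subset divset n, S != set0, gcdn (gcdS S) n == 1%N & #|S| == r]]|.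

(* omega on naturals: omega 0 = 1, omega m = (-1)^j if m = (3j^2 +- j)/2 for
   some j >= 1 (such j is necessarily <= m), and 0 otherwise. *)
Definition pent_index (m : nat) : option 'I_m.+1 :=
  [pick j : 'I_m.+1 | (0 < j)%N &&
     ((m.*2 == 3 * j ^ 2 + j) || (m.*2 == 3 * j ^ 2 - j))].

Definition omega_nat (m : nat) : int :=
  if m == 0%N then 1%R else
  match pent_index m with
  | Some j => ((-1) ^+ (j : nat))%R
  | None => 0%R
  end.

Definition omega (z : int) : int :=
  match z with
  | Posz m => omega_nat m
  | Negz _ => 0%R
  end.

(* Omega_m(k) = sum_{j>=0} omega(k - j m); for m >= 1 and k >= 0 all terms with
   j > k have negative argument, hence vanish, so the sum is truncated at j = k. *)
Definition Omega (m : nat) (k : int) : int :=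
  (\sum_(0 <= j < `|k|.+1) omega (k - (j * m)%:Z))%R.

From mathcomp Require Import all_boot all_order all_algebra zify.
Import GRing.Theory Num.Theory.
Set Implicit Arguments. Unset Strict Implicit. Unset Printing Implicit Defensive.

(* Grouping the nonempty sets of divisors of k by their gcd g and dividing
   through by g identifies those with gcd g with the relatively prime sets of
   divisors of k/g.  Hence 2^tau(k) - 1 = sum_(m | k) PhiTau m, and likewise
   binomial(tau k, r) = sum_(m | k) PhiTau_r r m.  Both identities then follow
   by exchanging the two summations, because sum_(k <= n, m | k) omega(n - k)
   is Omega_m(n - m); the particular values of omega play no role. *)

Definition divisor_subsets (k : nat) (P : pred nat) : {set {set 'I_k.+1}} :=
  [set S : {set 'I_k.+1} | [&& S \subset divset k, S != set0 & P #|S|]].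

Definition coprime_divisor_subsets (m : nat) (P : pred nat) : {set {set 'I_m.+1}} :=
  [set T : {set 'I_m.+1} | [&& T \subset divset m, T != set0, gcdn (gcdS T) m == 1 & P #|T|]].

Lemma PhiTauE m : PhiTau m = #|coprime_divisor_subsets m xpredT|.
Proof. by apply: eq_card => T; rewrite !inE andbT. Qed.

Lemma card_divset k : 0 < k -> #|divset k| = tau k.
Proof.
move=> k_gt0; rewrite /tau cardE -(size_map val); apply: perm_size.
apply: uniq_perm; [by rewrite (map_inj_uniq val_inj) enum_uniq | exact: divisors_uniq |].
move=> d; rewrite -dvdn_divisors //; apply/mapP/idP => [[e] | dk].
  by rewrite mem_enum inE => /andP[_ ek] ->.
have dk1 : d < k.+1 by rewrite ltnS dvdn_leq.
exists (Ordinal dk1) => //; rewrite mem_enum inE /= dk andbT lt0n.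
by apply: contraTneq dk => ->; rewrite dvd0n -lt0n.
Qed.

Lemma card_divisor_subsets k : 0 < k ->
  #|divisor_subsets k xpredT| = 2 ^ tau k - 1.
Proof.
move=> k_gt0; have -> : divisor_subsets k xpredT = powerset (divset k) :\ set0.
  by apply/setP => S; rewrite !inE andbT andbC.
by rewrite -card_divset // -card_powerset (cardsD1 set0 (powerset _)) inE sub0set add1n subn1.
Qed.

Lemma card_divisor_subsets_card k r : 0 < r ->
  #|divisor_subsets k (pred1 r)| = 'C(#|divset k|, r).
Proof.
move=> r_gt0; rewrite -cards_draws; apply: eq_card => S; rewrite !inE.
case: (S \subset _) => //=; case: eqP => [-> | _] //=.
by rewrite cards0 eq_sym gtn_eqF.
Qed.

Lemma gcdS_dvd n (S : {set 'I_n.+1}) (d : 'I_n.+1) : d \in S -> gcdS S %| d.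
Proof. by move=> Sd; rewrite /gcdS (bigD1 d) //= dvdn_gcdl. Qed.

Lemma gcdS_divset n (S : {set 'I_n.+1}) : S \subset divset n -> S != set0 ->
  0 < gcdS S /\ gcdS S %| n.
Proof.
move=> /subsetP Sn /set0Pn[d Sd]; have := Sn d Sd; rewrite inE => /andP[d_gt0 dn].
by split; [exact: dvdn_gt0 d_gt0 (gcdS_dvd Sd) | exact: dvdn_trans (gcdS_dvd Sd) dn].
Qed.

Section Dilation.

Variables (m g k : nat).
Hypotheses (mgk : m * g = k) (g_gt0 : 0 < g).

Definition dilate (d : 'I_m.+1) : 'I_k.+1 := inord (d * g).

Lemma dilateE d : dilate d = d * g :> nat.
Proof. by rewrite inordK // ltnS -mgk leq_mul2r -ltnS ltn_ord orbT. Qed.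

Lemma dilate_inj : injective dilate.
Proof. by move=> d e /(congr1 val) /eqP; rewrite /= !dilateE eqn_pmul2r // => /eqP/val_inj. Qed.

Lemma gcdS_dilate (T : {set 'I_m.+1}) : gcdS (dilate @: T) = gcdS T * g.
Proof.
rewrite /gcdS big_imset /=; last by move=> d e _ _; apply: dilate_inj.
rewrite (eq_bigr (fun d : 'I_m.+1 => d * g)) => [|d _]; last by rewrite dilateE.
by rewrite (big_morph (fun x => x * g) (fun x y => muln_gcdl x y g) (mul0n g)).
Qed.

Lemma dilate_sub_divset (T : {set 'I_m.+1}) : (dilate @: T \subset divset k) = (T \subset divset m).
Proof.
have dilate_divset d : (dilate d \in divset k) = (d \in divset m).
  by rewrite !inE dilateE -mgk muln_gt0 g_gt0 andbT dvdn_pmul2r.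
apply/subsetP/subsetP => [Tk d Td | Tm _ /imsetP[d Td ->]].
  by rewrite -dilate_divset Tk ?imset_f.
by rewrite dilate_divset Tm.
Qed.

Lemma dilate_preimage (S : {set 'I_k.+1}) :
  (forall s, s \in S -> g %| s) -> dilate @: (dilate @^-1: S) = S.
Proof.
move=> gS; apply/setP => s; apply/imsetP/idP => [[d] | Ss].
  by rewrite inE => Sd ->.
have sm : s %/ g < m.+1.
  by rewrite ltnS -(leq_pmul2r g_gt0) divnK ?gS // mgk -ltnS.
have sE : s = dilate (Ordinal sm) by apply: ord_inj; rewrite dilateE divnK ?gS.
by exists (Ordinal sm); rewrite // inE -sE.
Qed.

Lemma dilate_coprime_divisor_subsets P (T : {set 'I_m.+1}) :
  (dilate @: T \in divisor_subsets k P) && (gcdS (dilate @: T) == g)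
  = (T \in coprime_divisor_subsets m P).
Proof.
rewrite !inE dilate_sub_divset imset_eq0 gcdS_dilate card_imset; last exact: dilate_inj.
case Tm: (T \subset _); case: (boolP (T == set0)) => //= T0.
have [_ /gcdn_idPl ->] := gcdS_divset Tm T0.
by rewrite -{2}[g]mul1n eqn_pmul2r // andbC.
Qed.

Lemma card_divisor_subsets_gcdS P :
  #|[set S in divisor_subsets k P | gcdS S == g]| = #|coprime_divisor_subsets m P|.
Proof.
rewrite -(card_imset _ (imset_inj dilate_inj)); apply: eq_card => S.
rewrite inE; apply/idP/imsetP => [/andP[SP /eqP gS] | [T TP ->]].
  have gS_dvd s : s \in S -> g %| s by rewrite -gS; apply: gcdS_dvd.
  exists (dilate @^-1: S); last by rewrite dilate_preimage.
  by rewrite -dilate_coprime_divisor_subsets dilate_preimage // SP gS eqxx.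
by rewrite dilate_coprime_divisor_subsets.
Qed.

End Dilation.

Lemma card_divisor_subsets_partition P k n : 0 < k -> k <= n ->
  #|divisor_subsets k P| = \sum_(1 <= m < n.+1 | m %| k) #|coprime_divisor_subsets m P|.
Proof.
move=> k_gt0 kn.
have cofactorK d : d %| k -> k %/ (k %/ d) = d by move=> dk; rewrite divnA // mulKn.
transitivity (\sum_(S in divisor_subsets k P)
                \sum_(1 <= m < n.+1 | m %| k) (gcdS S == k %/ m : nat)); last first.
  rewrite exchange_big /=; apply: eq_bigr => m mk.
  have mkm : m * (k %/ m) = k by rewrite mulnC divnK.
  have m_gt0 := dvdn_gt0 k_gt0 mk.
  rewrite -(card_divisor_subsets_gcdS mkm); last by rewrite divn_gt0 // dvdn_leq.
  by rewrite -sum1dep_card big_mkcondr; apply: eq_bigr => S _; case: eqP.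
rewrite -sum1_card; apply: eq_bigr => S; rewrite inE => /and3P[Sk S0 _].
have [g_gt0 gk] := gcdS_divset Sk S0.
have cofactor_eq m :
    (if m %| k then (gcdS S == k %/ m : nat) else 0) = if m == k %/ gcdS S then 1 else 0.
  case: ifP => [mk | /negbT]; last by case: eqP => // ->; rewrite dvdn_div.
  by congr (nat_of_bool _); apply/eqP/eqP => [-> | ->]; rewrite cofactorK.
rewrite big_mkcond (eq_bigr _ (fun m _ => cofactor_eq m)) -big_mkcond big_nat1_eq.
by rewrite divn_gt0 // dvdn_leq //= ltnS (leq_trans (leq_div _ _) kn).
Qed.

Lemma sum_nat_dvdn (V : nmodType) (F : nat -> V) m N : 0 < m ->
  (\sum_(1 <= k < N.+1 | (m %| k)%N) F k = \sum_(1 <= q < (N %/ m).+1) F (q * m)%N)%R.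
Proof.
move=> m_gt0; elim: N => [|N IH]; first by rewrite div0n !big_geq.
rewrite [LHS]big_mkcond big_nat_recr //= -big_mkcond IH divnS //.
case: ifP => mN; last by rewrite addr0.
by rewrite -[in F N.+1](divnK mN) divnS // mN add1n [in RHS]big_nat_recr.
Qed.

Local Open Scope ring_scope.

Lemma omega_neg (n k : nat) : (n < k)%N -> omega (n%:Z - k%:Z) = 0.
Proof.
move=> nk; have : n%:Z - k%:Z < 0 by rewrite subr_lt0 ltz_nat.
by case: (n%:Z - k%:Z).
Qed.

Lemma Omega_sum_multiples m n : (0 < m)%N -> (m <= n)%N ->
  Omega m (n%:Z - m%:Z) = \sum_(1 <= k < n.+1 | (m %| k)%N) omega (n%:Z - k%:Z).
Proof.
move=> m_gt0 mn; rewrite sum_nat_dvdn // /Omega subzn //= big_add1 /=.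
have shift j : (n - m)%N%:Z - (j * m)%N%:Z = n%:Z - (j.+1 * m)%N%:Z.
  by rewrite -subzn // mulSn PoszD opprD addrA.
rewrite (eq_bigr _ (fun j _ => congr1 omega (shift j))).
rewrite (@big_cat_nat _ _ _ (n %/ m)) //=; last by rewrite -ltnS ltn_divLR //; nia.
rewrite [X in _ + X]big1_seq ?addr0 // => j /andP[_].
by rewrite mem_index_iota -ltnS ltn_divLR // => /andP[/omega_neg].
Qed.

Lemma sum_divisor_sum_omega n (g : nat -> int) :
  \sum_(1 <= k < n.+1) (\sum_(1 <= m < n.+1 | (m %| k)%N) g m) * omega (n%:Z - k%:Z)
  = \sum_(1 <= m < n.+1) g m * Omega m (n%:Z - m%:Z).
Proof.
under [RHS]eq_big_nat => m /andP[m_gt0 mn].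
  rewrite Omega_sum_multiples // big_distrr big_mkcond /=.
  over.
rewrite exchange_big /=; apply: eq_bigr => k _.
rewrite big_distrl big_mkcond /=; apply: eq_bigr => m _.
by case: ifP; rewrite ?mul0r.
Qed.

Theorem mainTheorem15 (n r : nat) (hn : (1 <= n)%N) (hr : (1 <= r)%N) :
  (\sum_(1 <= k < n.+1) ((2 ^ tau k - 1)%N)%:Z * omega (n%:Z - k%:Z)
     = \sum_(1 <= m < n.+1) (PhiTau m)%:Z * Omega m (n%:Z - m%:Z))
  /\
  (\sum_(1 <= k < n.+1) ('C(tau k, r))%:Z * omega (n%:Z - k%:Z)
     = \sum_(1 <= m < n.+1) (PhiTau_r r m)%:Z * Omega m (n%:Z - m%:Z)).
Proof.
have card_partition P k : (0 < k)%N -> (k <= n)%N -> #|divisor_subsets k P|%:Z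
    = \sum_(1 <= m < n.+1 | (m %| k)%N) #|coprime_divisor_subsets m P|%:Z.
  move=> k_gt0 kn; rewrite (@card_divisor_subsets_partition _ _ n) // -natz natr_sum.
  by apply: eq_bigr => m _; rewrite natz.
split; rewrite -sum_divisor_sum_omega; apply: eq_big_nat => k /andP[k_gt0 kn].
- rewrite -card_divisor_subsets // card_partition //.
  by congr (_ * _); apply: eq_bigr => m _; rewrite PhiTauE.
- by rewrite -card_divset // -card_divisor_subsets_card // card_partition.
Qed.
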